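(* Let $R$ be a commutative ring. Regard $\mathrm{Ob}_{\mathcal{I}}$ and $\mathrm{Iso}_{\mathcal{I}}$ as set-valued functors on the category $\mathrm{Alg}(R)$ of unital associative $R$-algebras (by composing with the forgetful functor to non-unital algebras). Then these functors are representable, the source and target maps $\mathrm{Iso}_{\mathcal{I}}\to \mathrm{Ob}_{\mathcal{I}}$ are both submersive morphisms of representable functors, and the representable functor $\mathrm{Ob}_{\mathcal{I}}$ is also submersive (i.e. $\mathrm{Ob}_{\mathcal{I}}\to \mathrm{Spec}^{nc}R$ is submersive).
   Context: For a (possibly non-unital) associative $R$-algebra $A$, $\mathrm{Ob}_{\mathcal{I}}(A):=\{e\in A : e^2=e\}$ and $\mathrm{Iso}_{\mathcal{I}}(A):=\{(f,g)\in A\times A : fgf=f,\ gfg=g\}$; the source and target of $(f,g)$ are $gf$ and $fg$ respectively. For $A\in\mathrm{Alg}(R)$, $\mathrm{Spec}^{nc}A$ is the functor $\mathrm{Hom}_{\mathrm{Alg}(R)}(A,-)$, and a morphism $\mathrm{Spec}^{nc}B\to\mathrm{Spec}^{nc}A$ of representable functors corresponds to an algebra map $A\to B$; it is called submersive if $A\to B$ is. A morphism $f\colon A\to B$ in $\mathrm{Alg}(R)$ is formally submersive if for every surjection $C\to D$ in $\mathrm{Alg}(R)$ with nilpotent kernel, the map $\mathrm{Hom}(B,C)\to \mathrm{Hom}(B,D)\times_{\mathrm{Hom}(A,D)}\mathrm{Hom}(A,C)$ is surjective; it is l.f.p. if for every filtered system $\{C_i\}$ with colimit $C$, the map $\varinjlim_i\mathrm{Hom}(B,C_i)\to\varinjlim_i\mathrm{Hom}(A,C_i)\times_{\mathrm{Hom}(A,C)}\mathrm{Hom}(B,C)$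 is a bijection; it is submersive if it is both. *)

From HB Require Import structures.
From mathcomp Require Import all_boot all_order all_algebra.
Set Implicit Arguments. Unset Strict Implicit. Unset Printing Implicit Defensive.
Import GRing.Theory.
Local Open Scope ring_scope.

(* Unital associative R-algebras, possibly the zero algebra.           *)
(* An R-algebra (R commutative) is a ring A together with a unital ring *)
(* homomorphism R -> A landing in the centre of A; r *: x := str r * x. *)
Record pzAlgType (R : comPzRingType) := PzAlgType {
  alg_ring :> pzRingType;
  alg_str : R -> alg_ring;
  alg_strD : forall r s, alg_str (r + s) = alg_str r + alg_str s;
  alg_strM : forall r s, alg_str (r * s) = alg_str r * alg_str s;
  alg_str1 : alg_str 1 = 1;
  alg_strC : forall r (x : alg_ring), alg_str r * x = x * alg_str r
}.

Definition regular_alg (R : comPzRingType) : pzAlgType R :=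
  @PzAlgType R R id (fun _ _ => erefl) (fun _ _ => erefl) erefl
    (fun r x => mulrC r x).

Record algHom (R : comPzRingType) (A B : pzAlgType R) := AlgHom {
  ahfun :> A -> B;
  ahD : forall x y, ahfun (x + y) = ahfun x + ahfun y;
  ahM : forall x y, ahfun (x * y) = ahfun x * ahfun y;
  ah1 : ahfun 1 = 1;
  ahS : forall r : R, ahfun (alg_str A r) = alg_str B r
}.

Definition isIdem (R : comPzRingType) (B : pzAlgType R) (e : B) : Prop := e * e = e.
Definition isIsoI (R : comPzRingType) (B : pzAlgType R) (f g : B) : Prop :=
  f * g * f = f /\ g * f * g = g.

(* Ob_I is represented by (A, e): e is a universal element, i.e.      *)
(* Hom(A,B) -> Ob_I(B), phi |-> phi e, is a bijection for every B      *)
(* (by Yoneda, equivalent to a natural isomorphism Spec^nc A = Ob_I).  *)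
Definition represents_Ob (R : comPzRingType) (A : pzAlgType R) (e : A) : Prop :=
  isIdem e /\
  forall B : pzAlgType R,
    (forall x : B, isIdem x -> exists phi : algHom A B, phi e = x) /\
    (forall phi psi : algHom A B, phi e = psi e -> forall z, phi z = psi z).

Definition represents_Iso (R : comPzRingType) (A : pzAlgType R) (f g : A) : Prop :=
  isIsoI f g /\
  forall B : pzAlgType R,
    (forall x y : B, isIsoI x y ->
       exists phi : algHom A B, phi f = x /\ phi g = y) /\
    (forall phi psi : algHom A B, phi f = psi f -> phi g = psi g ->
       forall z, phi z = psi z).

(* The kernel of pi is a nilpotent (two-sided) ideal: I^n = 0.         *)
Definition nilpotent_kernel (R : comPzRingType) (C D : pzAlgType R)
    (pi : algHom C D) : Prop :=
  exists n : nat, forall s : seq C, size s = n ->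
    (forall x, x \in s -> pi x = 0) -> \prod_(x <- s) x = 0.

Definition formally_submersive (R : comPzRingType) (A B : pzAlgType R)
    (f : algHom A B) : Prop :=
  forall (C D : pzAlgType R) (pi : algHom C D),
    (forall d : D, exists c : C, pi c = d) ->
    nilpotent_kernel pi ->
    forall (b : algHom B D) (a : algHom A C),
      (forall x, b (f x) = pi (a x)) ->
      exists c : algHom B C,
        (forall y, pi (c y) = b y) /\ (forall x, c (f x) = a x).

Record filtered_diagram (R : comPzRingType) := FilteredDiagram {
  fd_idx : Type;
  fd_hom : fd_idx -> fd_idx -> Type;
  fd_id : forall i, fd_hom i i;
  fd_comp : forall i j k, fd_hom j k -> fd_hom i j -> fd_hom i k;
  fd_compl : forall i j (u : fd_hom i j), fd_comp (fd_id j) u = u;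
  fd_compr : forall i j (u : fd_hom i j), fd_comp u (fd_id i) = u;
  fd_compA : forall i j k l (u : fd_hom i j) (v : fd_hom j k) (w : fd_hom k l),
      fd_comp w (fd_comp v u) = fd_comp (fd_comp w v) u;
  fd_nonempty : inhabited fd_idx;
  fd_upper : forall i j, exists k, inhabited (fd_hom i k) /\ inhabited (fd_hom j k);
  fd_coeq : forall i j (u v : fd_hom i j),
      exists k, exists w : fd_hom j k, fd_comp w u = fd_comp w v;
  fd_obj : fd_idx -> pzAlgType R;
  fd_map : forall i j, fd_hom i j -> algHom (fd_obj i) (fd_obj j);
  fd_map_id : forall i x, fd_map (fd_id i) x = x;
  fd_map_comp : forall i j k (v : fd_hom j k) (u : fd_hom i j) x,
      fd_map (fd_comp v u) x = fd_map v (fd_map u x)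
}.


Arguments fd_obj {R} f _ : rename.
Arguments fd_hom {R} f _ _ : rename.
Arguments fd_map {R f i j} _ : rename.
Arguments fd_comp {R f i j k} _ _ : rename.
Arguments fd_id {R f} _ : rename.

Definition is_colimit (R : comPzRingType) (Dg : filtered_diagram R)
    (C : pzAlgType R) (iota : forall i, algHom (fd_obj Dg i) C) : Prop :=
  (forall i j (u : fd_hom Dg i j) x, iota j (fd_map u x) = iota i x) /\
  forall (E : pzAlgType R) (eps : forall i, algHom (fd_obj Dg i) E),
    (forall i j (u : fd_hom Dg i j) x, eps j (fd_map u x) = eps i x) ->
    (exists h : algHom C E, forall i x, h (iota i x) = eps i x) /\
    (forall h h' : algHom C E,
        (forall i x, h (iota i x) = eps i x) ->
        (forall i x, h' (iota i x) = eps i x) ->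
        forall z, h z = h' z).

(* f : A -> B is l.f.p.: for every filtered diagram {C_i} with colimit C,
   colim_i Hom(B,C_i) -> colim_i Hom(A,C_i) x_{Hom(A,C)} Hom(B,C)
   is a bijection.  Elements of colim_i Hom(X,C_i) are classes of pairs
   (i, x) with (i,x) ~ (j,y) iff they become equal in some C_k. *)
Definition lfp (R : comPzRingType) (A B : pzAlgType R) (f : algHom A B) : Prop :=
  forall (Dg : filtered_diagram R) (C : pzAlgType R)
         (iota : forall i, algHom (fd_obj Dg i) C),
    is_colimit iota ->
    (forall i (a : algHom A (fd_obj Dg i)) (b : algHom B C),
        (forall x, iota i (a x) = b (f x)) ->
        exists j (b' : algHom B (fd_obj Dg j)),
          (forall y, iota j (b' y) = b y) /\
          exists k (u : fd_hom Dg j k) (v : fd_hom Dg i k),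
            forall x, fd_map u (b' (f x)) = fd_map v (a x)) /\
    (forall i j (b1 : algHom B (fd_obj Dg i)) (b2 : algHom B (fd_obj Dg j)),
        (exists k (u : fd_hom Dg i k) (v : fd_hom Dg j k),
            forall x, fd_map u (b1 (f x)) = fd_map v (b2 (f x))) ->
        (forall y, iota i (b1 y) = iota j (b2 y)) ->
        exists k (u : fd_hom Dg i k) (v : fd_hom Dg j k),
          forall y, fd_map u (b1 y) = fd_map v (b2 y)).

Definition submersive (R : comPzRingType) (A B : pzAlgType R) (f : algHom A B) : Prop :=
  formally_submersive f /\ lfp f.

From HB Require Import structures.
From mathcomp Require Import all_boot all_order all_algebra.
From mathcomp Require Import ring boolp finmap.
From mathcomp.multinomials Require Import monalg.
Set Implicit Arguments. Unset Strict Implicit. Unset Printing Implicit Defensive.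
Import GRing.Theory.
Local Open Scope ring_scope.

(* Ob_I is represented by R x R with e = (1, 0), and Iso_I by the monoid algebra
   of <f, g | fgf = f, gfg = g>, whose elements are the words avoiding the
   factors fgf and gfg (over the zero ring, by the zero ring itself).  Both
   algebras are finitely presented, which gives the l.f.p. property once
   filtered colimits in Alg(R) are described concretely.  For formal
   submersiveness, idempotents lift along nilpotent extensions by iterating
   a |-> 3a^2 - 2a^3, and a pair (X, Y) with YX = pi eps lifts to (x, w y), where
   w inverts the unipotent element eps - y x of the corner ring eps C eps; the
   target case follows by exchanging f and g. *)

Section AlgHomTheory.
Variables (R : comPzRingType) (A B : pzAlgType R) (phi : algHom A B).

Lemma ah0 : phi 0 = 0.
Proof. by apply: (@addrI _ (phi 0)); rewrite -ahD !addr0. Qed.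

Lemma ahN x : phi (- x) = - phi x.
Proof. by apply: (@addrI _ (phi x)); rewrite -ahD !subrr ah0. Qed.

Lemma ahB x y : phi (x - y) = phi x - phi y.
Proof. by rewrite ahD ahN. Qed.

Lemma ah_sum (I : Type) (r : seq I) (F : I -> A) :
  phi (\sum_(i <- r) F i) = \sum_(i <- r) phi (F i).
Proof. exact: (big_morph phi (ahD phi) ah0). Qed.

End AlgHomTheory.

Lemma alg_str0 (R : comPzRingType) (B : pzAlgType R) : alg_str B 0 = 0.
Proof. by apply: (@addrI _ (alg_str B 0)); rewrite -alg_strD !addr0. Qed.

Lemma alg_strCA (R : comPzRingType) (B : pzAlgType R) r (x y : B) :
  x * (alg_str B r * y) = alg_str B r * (x * y).
Proof. by rewrite mulrA -alg_strC mulrA. Qed.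

Definition ahcomp (R : comPzRingType) (A B C : pzAlgType R)
  (g : algHom B C) (f : algHom A B) : algHom A C.
Proof.
refine (@AlgHom R A C (fun x => g (f x)) _ _ _ _).
- by move=> x y; rewrite !ahD.
- by move=> x y; rewrite !ahM.
- by rewrite !ah1.
- by move=> r; rewrite !ahS.
Defined.

Lemma ahcompE (R : comPzRingType) (A B C : pzAlgType R)
  (g : algHom B C) (f : algHom A B) x : ahcomp g f x = g (f x).
Proof. by []. Qed.

Definition ahid (R : comPzRingType) (A : pzAlgType R) : algHom A A :=
  @AlgHom R A A id (fun _ _ => erefl) (fun _ _ => erefl) erefl (fun _ => erefl).

Definition str_hom (R : comPzRingType) (C : pzAlgType R) : algHom (regular_alg R) C :=
  @AlgHom R (regular_alg R) C (alg_str C) (@alg_strD R C) (@alg_strM R C)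
    (alg_str1 C) (fun _ => erefl).

(* [endpoint true x y] is the target [x y], [endpoint false x y] the source [y x]. *)
Definition endpoint (B : pzRingType) (c : bool) (x y : B) : B :=
  if c then x * y else y * x.

Lemma ah_endpoint (R : comPzRingType) (A B : pzAlgType R) (phi : algHom A B) c x y :
  phi (endpoint c x y) = endpoint c (phi x) (phi y).
Proof. by case: c; rewrite /= ahM. Qed.

Section IdemAlg.
Variable R : comPzRingType.

Definition idem_str (r : R) : R * R := (r, r).

Lemma idem_strC r (x : R * R) : idem_str r * x = x * idem_str r.
Proof. by case: x => a b; congr (_, _); apply: mulrC. Qed.

Definition idem_alg : pzAlgType R :=
  @PzAlgType R (R * R)%type idem_str (fun _ _ => erefl) (fun _ _ => erefl) erefl
    idem_strC.

Definition idem_gen : idem_alg := (1, 0).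

Lemma idem_gen_idem : isIdem idem_gen.
Proof. by rewrite /isIdem /idem_gen /=; congr (_, _); rewrite ?mulr1 ?mulr0. Qed.

Section IdemHom.
Variables (B : pzAlgType R) (x : B).
Hypothesis x_idem : isIdem x.

Definition idem_eval (z : idem_alg) : B :=
  alg_str B z.1 * x + alg_str B z.2 * (1 - x).

Lemma idem_evalD z1 z2 : idem_eval (z1 + z2) = idem_eval z1 + idem_eval z2.
Proof. by rewrite /idem_eval !alg_strD !mulrDl addrACA. Qed.

Lemma idem_evalM z1 z2 : idem_eval (z1 * z2) = idem_eval z1 * idem_eval z2.
Proof.
rewrite /idem_eval !alg_strM; have xx : x * x = x := x_idem.
have x_x' : x * (1 - x) = 0 by rewrite mulrBr mulr1 xx subrr.
have x'_x : (1 - x) * x = 0 by rewrite mulrBl mul1r xx subrr.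
have x'x' : (1 - x) * (1 - x) = 1 - x by rewrite mulrBr mulr1 x'_x subr0.
move: (1 - x) x_x' x'_x x'x' => x' x_x' x'_x x'x'.
rewrite mulrDl !mulrDr -!mulrA.
rewrite ![x * (alg_str B _ * _)]alg_strCA ![x' * (alg_str B _ * _)]alg_strCA.
by rewrite xx x_x' x'_x x'x' !mulr0 addr0 add0r !mulrA.
Qed.

Lemma idem_eval1 : idem_eval 1 = 1.
Proof. by rewrite /idem_eval /= alg_str1 !mul1r addrC subrK. Qed.

Lemma idem_evalS r : idem_eval (alg_str idem_alg r) = alg_str B r.
Proof. by rewrite /idem_eval /= -mulrDr addrC subrK mulr1. Qed.

Definition idem_hom : algHom idem_alg B :=
  AlgHom idem_evalD idem_evalM idem_eval1 idem_evalS.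

Lemma idem_hom_gen : idem_hom idem_gen = x.
Proof. by rewrite /= /idem_eval /= alg_str1 alg_str0 mul0r addr0 mul1r. Qed.

End IdemHom.

Lemma idem_hom_eq (B : pzAlgType R) (phi psi : algHom idem_alg B) :
  phi idem_gen = psi idem_gen -> forall z, phi z = psi z.
Proof.
move=> eq_gen z.
have -> : z = alg_str idem_alg z.1 * idem_gen + alg_str idem_alg z.2 * (1 - idem_gen).
  by case: z => a b; congr (_, _); rewrite /= ?subrr ?subr0 ?mulr0 ?mulr1 ?addr0 ?add0r.
by rewrite !ahD !ahM !ahB !ah1 !ahS eq_gen.
Qed.

Lemma idem_alg_represents : represents_Ob idem_gen.
Proof.
split=> [|B]; first exact: idem_gen_idem.
by split=> [x x_idem|]; [exists (idem_hom x_idem); apply: idem_hom_gen | apply: idem_hom_eq].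
Qed.

End IdemAlg.

(* Words in the letters [true] (for f) and [false] (for g) are stored reversed,
   last letter first; [push s x] appends the letter [x] and cancels a resulting
   factor [x y x] to [x]. *)
Definition push (s : seq bool) (x : bool) : seq bool :=
  match s with
  | y :: z :: r => if (y != x) && (z == x) then z :: r else x :: s
  | _ => x :: s
  end.

Fixpoint reduced (s : seq bool) : bool :=
  match s with
  | a :: ((b :: c :: _) as t) => ~~ ((a != b) && (c == a)) && reduced t
  | _ => true
  end.

Lemma reduced_behead x s : reduced (x :: s) -> reduced s.
Proof. by case: s => [|b [|c t]] //= /andP[]. Qed.

Lemma reduced_push s x : reduced s -> reduced (push s x).
Proof.
case: s => [|y [|z r]] // red_s; rewrite /push.
case: ifP => [_|h]; first exact: reduced_behead red_s.
by rewrite [reduced _]/= -/(reduced [:: y, z & r]) red_s andbT eq_sym h.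
Qed.

Lemma push_reduced s x : reduced (x :: s) -> push s x = x :: s.
Proof. by case: s => [|y [|z r]] //= /andP[/negbTE]; rewrite eq_sym => ->. Qed.

Lemma push_cons s x : exists w, push s x = x :: w.
Proof.
case: s => [|y [|z r]] /=; try by eexists.
by case: ifP => [/andP[_ /eqP->]|_]; eexists.
Qed.

Lemma reduced_foldl_push s l : reduced s -> reduced (foldl push s l).
Proof. by elim: l s => //= x l IHl s red_s; apply/IHl/reduced_push. Qed.

Lemma foldl_push_nil t : reduced t -> foldl push [::] (rev t) = t.
Proof.
elim: t => // x t IHt red_xt.
by rewrite rev_cons -cats1 foldl_cat IHt ?(reduced_behead red_xt) //= push_reduced.
Qed.

Lemma foldl_push_eq_nil s l : foldl push s l = [::] -> s = [::] /\ l = [::].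
Proof.
elim: l s => //= x l IHl s /IHl [push_nil _].
by have [w push_sx] := push_cons s x; rewrite push_sx in push_nil.
Qed.

Lemma push_pushK w x y : reduced (x :: w) -> y != x -> push (push (x :: w) y) x = x :: w.
Proof.
case: w => [|a r] red_xw yx /=; first by rewrite yx eqxx.
case: ifP => [/andP[_ /eqP ay]|_]; last by rewrite /= yx eqxx.
subst a; case: r red_xw => [|b r] //= /andP[b_ok _].
by move: b_ok; rewrite eq_sym yx /= => /negbTE ->.
Qed.

Lemma foldl_push_rev_push s t x : reduced s -> reduced t ->
  foldl push s (rev (push t x)) = push (foldl push s (rev t)) x.
Proof.
move=> red_s red_t.
have push_cat u : foldl push s (rev (x :: u)) = push (foldl push s (rev u)) x.
  by rewrite rev_cons -cats1 foldl_cat.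
case: t red_t => [|y [|z r]] red_t; try exact: push_cat.
rewrite [push _ x]/push; case: ifP => [/andP[yx /eqP zx]|_]; last exact: push_cat.
subst z; rewrite !rev_cons -!cats1 !foldl_cat /=.
have [w push_rx] := push_cons (foldl push s (rev r)) x.
rewrite push_rx push_pushK // -push_rx.
exact/reduced_push/reduced_foldl_push.
Qed.

Lemma foldl_push_rev_foldl s t l : reduced s -> reduced t ->
  foldl push s (rev (foldl push t l)) = foldl push (foldl push s (rev t)) l.
Proof.
elim: l t => //= x l IHl t red_s red_t.
by rewrite IHl ?reduced_push // foldl_push_rev_push.
Qed.

Definition word := {s : seq bool | reduced s}.
HB.instance Definition _ := [Choice of word by <:].

Definition word_mul (a b : word) : word :=
  exist _ (foldl push (val a) (rev (val b))) (reduced_foldl_push _ (valP a)).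
Definition word1 : word := exist _ [::] erefl.

Lemma mulwA : associative word_mul.
Proof.
move=> a b c; apply: val_inj.
by rewrite /= foldl_push_rev_foldl ?revK //; apply: valP.
Qed.

Lemma mul1w : left_id word1 word_mul.
Proof. by move=> a; apply: val_inj; rewrite /= foldl_push_nil //; apply: valP. Qed.

Lemma mulw1 : right_id word1 word_mul.
Proof. by move=> a; apply: val_inj. Qed.

Lemma mulw_eq1 a b : word_mul a b = word1 -> a = word1 /\ b = word1.
Proof.
move=> /(congr1 val) /foldl_push_eq_nil [a_nil b_nil].
by split; apply: val_inj; rewrite //= -(revK (val b)) b_nil.
Qed.

HB.instance Definition _ :=
  Choice_isMonomialDef.Build word mulwA mul1w mulw1 mulw_eq1.

(* The monoid algebra below needs a nonzero coefficient ring. *)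
Definition nz_ring (R : comPzRingType) (_ : (1 : R) != 0) : Type := R.
HB.instance Definition _ R nzR := GRing.ComPzRing.on (@nz_ring R nzR).
HB.instance Definition _ R nzR :=
  GRing.PzSemiRing_isNonZero.Build (@nz_ring R nzR) nzR.

Section IsoAlg.
Variables (R : comPzRingType) (nzR : (1 : R) != 0).
Local Notation K := (nz_ring nzR).
Definition iso_ring := {malg K[word]}.

Lemma malgMU (a b : K) (k l : word) :
  << a *g k >> * << b *g l >> = << a * b *g mmul k l >> :> iso_ring.
Proof. by rewrite malgM_def fgmulUU. Qed.

Definition iso_str (r : R) : iso_ring := (r : K)%:MP.

Lemma iso_strC r (x : iso_ring) : iso_str r * x = x * iso_str r.
Proof.
rewrite [x]monalgE mulr_sumr mulr_suml; apply: eq_bigr => k _.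
by rewrite /iso_str !malgMU mulrC mulm1 mul1m.
Qed.

Lemma iso_strD r s : iso_str (r + s) = iso_str r + iso_str s.
Proof. exact: monalgUD. Qed.

Lemma iso_strM r s : iso_str (r * s) = iso_str r * iso_str s.
Proof. exact: mpolyCM. Qed.

Definition iso_alg : pzAlgType R :=
  @PzAlgType R iso_ring iso_str iso_strD iso_strM (mpolyC1E _ _) iso_strC.

Definition letter_word (c : bool) : word := exist _ [:: c] erefl.
Definition iso_f : iso_alg := << letter_word true >>.
Definition iso_g : iso_alg := << letter_word false >>.

Lemma iso_fg_isoI : isIsoI iso_f iso_g.
Proof. by split; rewrite /iso_f /iso_g /= !malgMU !mulr1; congr << _ >>; apply: val_inj. Qed.

Lemma malg_word_cons c s (red_cs : reduced (c :: s)) :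
  << (exist _ (c :: s) red_cs : word) >> =
  << (exist _ s (reduced_behead red_cs) : word) >> * << letter_word c >> :> iso_ring.
Proof. by rewrite malgMU mulr1; congr << _ >>; apply: val_inj; rewrite /= push_reduced. Qed.

Lemma iso_hom_eq (B : pzAlgType R) (phi psi : algHom iso_alg B) :
  phi iso_f = psi iso_f -> phi iso_g = psi iso_g -> forall z, phi z = psi z.
Proof.
move=> eq_f eq_g.
have eq_word (k : word) : phi (<< k >> : iso_ring) = psi (<< k >> : iso_ring).
  case: k => s; elim: s => [|c s IHs] red_s.
    have -> : (<< (exist _ [::] red_s : word) >> : iso_ring) = 1.
      by congr << _ >>; apply: val_inj.
    by rewrite !ah1.
  rewrite malg_word_cons !(ahM _ (<< _ >> : iso_alg)) IHs.
  by congr (_ * _); case: c {red_s}.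
move=> z; rewrite [z : iso_ring]monalgE !ah_sum; apply: eq_bigr => k _.
have -> : << (z : iso_ring)@_k *g k >> = iso_str ((z : iso_ring)@_k) * << k >>.
  by rewrite malgMU mulr1 mul1m.
by rewrite !(ahM _ (iso_str _ : iso_alg)) eq_word (ahS phi) (ahS psi).
Qed.
End IsoAlg.

Section WordEval.
Variables (R : comPzRingType) (B : pzAlgType R) (x y : B).
Hypothesis xy_isoI : isIsoI x y.

Definition letter (c : bool) : B := if c then x else y.
Definition seq_eval (s : seq bool) : B := \prod_(c <- rev s) letter c.
Definition word_eval (k : word) : B := seq_eval (val k).

Lemma seq_eval_cons c s : seq_eval (c :: s) = seq_eval s * letter c.
Proof. by rewrite /seq_eval rev_cons -cats1 big_cat big_seq1. Qed.

Lemma seq_eval_push s c : seq_eval (push s c) = seq_eval s * letter c.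
Proof.
case: s => [|a [|b r]]; rewrite /push ?seq_eval_cons //.
case: ifP => [/andP[ac /eqP->]|_]; rewrite !seq_eval_cons // -!mulrA; congr (_ * _).
by case: xy_isoI => xyx yxy; case: c a ac => [] [] //= _; rewrite mulrA.
Qed.

Lemma seq_eval_foldl s l : seq_eval (foldl push s l) = seq_eval s * \prod_(c <- l) letter c.
Proof.
elim: l s => [|c l IHl] s /=; first by rewrite big_nil mulr1.
by rewrite IHl seq_eval_push big_cons mulrA.
Qed.

Lemma word_evalM a b : word_eval (word_mul a b) = word_eval a * word_eval b.
Proof. exact: seq_eval_foldl. Qed.

Lemma word_eval1 : word_eval word1 = 1.
Proof. exact: big_nil. Qed.

Lemma word_eval_letter c : word_eval (letter_word c) = letter c.
Proof. exact: big_seq1. Qed.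

End WordEval.

Section IsoHom.
Variables (R : comPzRingType) (nzR : (1 : R) != 0) (B : pzAlgType R) (x y : B).
Hypothesis xy_isoI : isIsoI x y.
Local Notation A := (iso_alg nzR).

Definition iso_eval (z : A) : B :=
  \sum_(k <- msupp (z : iso_ring nzR)) alg_str B ((z : iso_ring nzR)@_k : R) * word_eval x y k.

Lemma iso_evalEw (d : {fset word}) (z : iso_ring nzR) : (msupp z `<=` d)%fset ->
  iso_eval z = \sum_(k <- d) alg_str B (z@_k : R) * word_eval x y k.
Proof.
move=> le_supp; rewrite /iso_eval (big_fset_incl _ le_supp) //= => k _ /mcoeff_outdom ->.
by rewrite alg_str0 mul0r.
Qed.

Lemma iso_evalD z1 z2 : iso_eval (z1 + z2) = iso_eval z1 + iso_eval z2.
Proof.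
pose d := (msupp (z1 : iso_ring nzR) `|` msupp (z2 : iso_ring nzR)
  `|` msupp (z1 + z2 : iso_ring nzR))%fset.
rewrite (@iso_evalEw d) ?fsubsetUr // (@iso_evalEw d z1); last first.
  by rewrite /d -fsetUA fsubsetUl.
rewrite (@iso_evalEw d z2); last by rewrite /d fsubsetU // fsubsetUr.
by rewrite -big_split; apply: eq_bigr => k _; rewrite mcoeffD alg_strD mulrDl.
Qed.

Lemma iso_evalU (c : nz_ring nzR) (k : word) :
  iso_eval << c *g k >> = alg_str B (c : R) * word_eval x y k.
Proof. by rewrite (@iso_evalEw _ _ msuppU_le) big_seq_fset1 mcoeffUU. Qed.

Lemma iso_eval_sum (I : Type) (r : seq I) (F : I -> A) :
  iso_eval (\sum_(i <- r) F i) = \sum_(i <- r) iso_eval (F i).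
Proof.
apply: (big_morph iso_eval iso_evalD).
by rewrite /iso_eval msupp0 big_seq_fset0.
Qed.

Lemma iso_evalM z1 z2 : iso_eval (z1 * z2) = iso_eval z1 * iso_eval z2.
Proof.
rewrite malgME iso_eval_sum [iso_eval z1]/iso_eval big_distrl; apply: eq_bigr => k1 _.
rewrite iso_eval_sum [iso_eval z2]/iso_eval big_distrr; apply: eq_bigr => k2 _.
rewrite iso_evalU alg_strM word_evalM // -[RHS]/(_ * _ : B) -!mulrA.
by rewrite [word_eval _ _ k1 * (_ * _)]alg_strCA.
Qed.

Lemma iso_eval1 : iso_eval 1 = 1.
Proof. by rewrite -[1]/(iso_str nzR 1) iso_evalU alg_str1 mul1r word_eval1. Qed.

Lemma iso_evalS r : iso_eval (alg_str A r) = alg_str B r.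
Proof. by rewrite iso_evalU word_eval1 mulr1. Qed.

Definition iso_hom : algHom A B := AlgHom iso_evalD iso_evalM iso_eval1 iso_evalS.

Lemma iso_hom_f : iso_hom (iso_f nzR) = x.
Proof. by rewrite /= iso_evalU alg_str1 mul1r word_eval_letter. Qed.

Lemma iso_hom_g : iso_hom (iso_g nzR) = y.
Proof. by rewrite /= iso_evalU alg_str1 mul1r word_eval_letter. Qed.

End IsoHom.

Lemma iso_alg_represents (R : comPzRingType) (nzR : (1 : R) != 0) :
  represents_Iso (iso_f nzR) (iso_g nzR).
Proof.
split=> [|B]; first exact: iso_fg_isoI.
split=> [x y xy_isoI|]; last exact: iso_hom_eq.
by exists (iso_hom nzR xy_isoI); rewrite iso_hom_f iso_hom_g.
Qed.

(* Evaluating integer polynomials needs a nonzero ring. *)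
Definition nz_pzring (C : pzRingType) (_ : (1 : C) != 0) : Type := C.
HB.instance Definition _ C nzC := GRing.PzRing.on (@nz_pzring C nzC).
HB.instance Definition _ C nzC :=
  GRing.PzSemiRing_isNonZero.Build (@nz_pzring C nzC) nzC.

(* [a + d * (1 - 2a) = 3a^2 - 2a^3]: this step multiplies the idempotency defect
   [d] by a multiple of [d]. *)
Lemma idem_defect_step (C : pzRingType) (a : C) :
  let d := a * a - a in let a' := a + d * (1 - a *+ 2) in
  a' * a' - a' = d * (d * (d *+ 4 - 3)).
Proof.
have [C0|nzC] := eqVneq (1 : C) 0.
  by rewrite /= -[LHS]mulr1 -[RHS]mulr1 C0 !mulr0.
have intr_comm : commr_rmorph (intr : int -> nz_pzring nzC) a.
  by move=> z; rewrite /GRing.comm mulrzl mulrzr.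
have poly_id (p : {poly int}) : let d := p * p - p in let p' := p + d * (1 - p *+ 2) in
    p' * p' - p' = d * (d * (d *+ 4 - 3)).
  by move=> /=; ring.
have := congr1 (horner_morph intr_comm) (poly_id 'X) => /=.
by rewrite !(rmorphB, rmorphD, rmorphM, rmorphMn, rmorph1) /= !horner_morphX.
Qed.

Lemma regular_hom_eq (R : comPzRingType) (C : pzAlgType R)
  (h1 h2 : algHom (regular_alg R) C) r : h1 r = h2 r.
Proof. exact: etrans (ahS h1 r) (esym (ahS h2 r)). Qed.

Lemma isIsoI_sym (R : comPzRingType) (B : pzAlgType R) (x y : B) :
  isIsoI x y -> isIsoI y x.
Proof. by case. Qed.

(* In the corner ring [e C e], [e - m] is invertible for nilpotent [m],
   with inverse [e * \sum_(k < N) m ^+ k]. *)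
Lemma corner_left_inverse (C : pzRingType) (e m : C) N :
  e * e = e -> e * m = m -> m * e = m -> m ^+ N = 0 ->
  exists w, [/\ e * w = w, w * e = w & w * (e - m) = e].
Proof.
move=> ee em me mN; pose S := \sum_(k < N) m ^+ k.
have comm_S x : GRing.comm x m -> GRing.comm x S.
  by move=> xm; apply: commr_sum => k _; apply: commrX.
have eS : GRing.comm e S by apply: comm_S; rewrite /GRing.comm em me.
have S1m : S * (1 - m) = 1.
  have mS : GRing.comm m S := comm_S m (commr_refl m).
  by rewrite mulrBr mulr1 -mS -{1}[S]mul1r -mulrBl -opprB mulNr -subrX1 mN sub0r opprK.
exists (e * S); split; first by rewrite mulrA ee.
  by rewrite -mulrA -eS mulrA ee.
have -> : e - m = (1 - m) * e by rewrite mulrBl mul1r me.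
by rewrite mulrA -(mulrA e) S1m mulr1 ee.
Qed.

Section NilpotentLifting.
Variables (R : comPzRingType) (C D : pzAlgType R) (pi : algHom C D).
Hypotheses (pi_surj : forall d : D, exists c : C, pi c = d)
  (pi_nil : nilpotent_kernel pi).

Lemma kernel_expr_eq0 m : pi m = 0 -> exists N, m ^+ N = 0.
Proof.
move=> pm; have [N prod0] := pi_nil; exists N.
have -> : m ^+ N = \prod_(x <- nseq N m) x.
  by elim: N {prod0} => [|N IHN]; rewrite ?big_nil // big_cons exprS IHN.
by apply: prod0; rewrite ?size_nseq // => x /nseqP [->].
Qed.

Lemma lift_idem_approx (eb : D) : isIdem eb -> forall k, exists a : C, pi a = eb /\
  exists2 s : seq C, size s = k.+1 /\ (forall y, y \in s -> pi y = 0) &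
    a * a - a = \prod_(y <- s) y.
Proof.
move=> eb_idem; elim=> [|k [a [pa [s [size_s ker_s] defect_a]]]].
  have [a pa] := pi_surj eb; exists a; split=> //.
  exists [:: a * a - a]; last by rewrite big_seq1.
  by split=> // y; rewrite inE => /eqP->; rewrite ahB ahM pa eb_idem subrr.
have pd : pi (a * a - a) = 0 by rewrite ahB ahM pa eb_idem subrr.
exists (a + (a * a - a) * (1 - a *+ 2)); split; first by rewrite ahD ahM pd mul0r addr0.
exists (rcons s ((a * a - a) * ((a * a - a) *+ 4 - 3))).
  split=> [|y]; first by rewrite size_rcons size_s.
  by rewrite mem_rcons inE => /orP[/eqP->|/ker_s //]; rewrite ahM pd mul0r.
by rewrite idem_defect_step -cats1 big_cat big_seq1 /= defect_a.
Qed.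

Lemma lift_idem (eb : D) : isIdem eb -> exists e : C, isIdem e /\ pi e = eb.
Proof.
move=> eb_idem; have [n prod0] := pi_nil.
have [a [pa [s [size_s ker_s] defect_a]]] := lift_idem_approx eb_idem n.
exists a; split=> //; apply/eqP; rewrite -subr_eq0 defect_a.
rewrite -(cat_take_drop n s) big_cat /= prod0 ?mul0r //; first by rewrite size_take size_s ltnSn.
by move=> y /mem_take /ker_s.
Qed.

Lemma lift_isoI_source (eps : C) (X Y : D) :
  isIdem eps -> isIsoI X Y -> Y * X = pi eps ->
  exists x y, [/\ isIsoI x y, y * x = eps, pi x = X & pi y = Y].
Proof.
move=> ee [XYX YXY] YX.
have [x px xe] : exists2 x, pi x = X & x * eps = x.
  have [x0 px0] := pi_surj X.
  by exists (x0 * eps); rewrite ?ahM ?px0 -?YX ?mulrA ?XYX // -mulrA ee.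
have [y py ey] : exists2 y, pi y = Y & eps * y = y.
  have [y0 py0] := pi_surj Y.
  by exists (eps * y0); rewrite ?ahM ?py0 -?YX ?YXY // mulrA ee.
pose m := eps - y * x.
have pm : pi m = 0 by rewrite ahB ahM px py YX subrr.
have em : eps * m = m by rewrite mulrBr ee mulrA ey.
have me : m * eps = m by rewrite mulrBl ee -mulrA xe.
have [N mN] := kernel_expr_eq0 pm.
have [w [ew we w_inv]] := corner_left_inverse ee em me mN.
have yx : y * x = eps - m by rewrite opprB addrC subrK.
have pw : pi w = pi eps by rewrite -w_inv -{1}we !ahM ahB pm subr0.
have wyx : w * y * x = eps by rewrite -mulrA yx w_inv.
exists x, (w * y); split=> //; last by rewrite ahM pw py -YX YXY.
by split; [rewrite -mulrA wyx xe | rewrite wyx mulrA ew].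
Qed.

Lemma lift_isoI c (eps : C) (X Y : D) :
  isIdem eps -> isIsoI X Y -> endpoint c X Y = pi eps ->
  exists x y, [/\ isIsoI x y, endpoint c x y = eps, pi x = X & pi y = Y].
Proof.
case: c => /= ee XY_isoI XY; last exact: lift_isoI_source.
have [y [x [yx_isoI xy px py]]] := lift_isoI_source ee (isIsoI_sym XY_isoI) XY.
by exists x, y; split=> //; apply: isIsoI_sym.
Qed.

End NilpotentLifting.

Lemma idem_str_formally_submersive (R : comPzRingType)
  (u : algHom (regular_alg R) (idem_alg R)) : formally_submersive u.
Proof.
move=> C D pi pi_surj pi_nil b a _.
have b_idem : isIdem (b (idem_gen R)) by rewrite /isIdem -ahM idem_gen_idem.
have [e [e_idem pe]] := lift_idem pi_surj pi_nil b_idem.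
exists (idem_hom e_idem); split.
  by apply: (idem_hom_eq (phi := ahcomp pi (idem_hom e_idem))); rewrite ahcompE idem_hom_gen.
by move=> r; apply: (regular_hom_eq (ahcomp (idem_hom e_idem) u)).
Qed.

Lemma endpoint_formally_submersive (R : comPzRingType) (nzR : (1 : R) != 0) c
  (s : algHom (idem_alg R) (iso_alg nzR)) :
  s (idem_gen R) = endpoint c (iso_f nzR) (iso_g nzR) -> formally_submersive s.
Proof.
move=> s_gen C D pi pi_surj pi_nil b a ba.
have a_idem : isIdem (a (idem_gen R)) by rewrite /isIdem -ahM idem_gen_idem.
have [fgf gfg] := iso_fg_isoI nzR.
have b_isoI : isIsoI (b (iso_f nzR)) (b (iso_g nzR)) by split; rewrite -!ahM ?fgf ?gfg.
have b_end : endpoint c (b (iso_f nzR)) (b (iso_g nzR)) = pi (a (idem_gen R)).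
  by rewrite -ah_endpoint -s_gen ba.
have [x [y [xy_isoI xy px py]]] := lift_isoI pi_surj pi_nil a_idem b_isoI b_end.
exists (iso_hom nzR xy_isoI); split.
  apply: (iso_hom_eq (phi := ahcomp pi (iso_hom nzR xy_isoI)));
  by rewrite ahcompE ?iso_hom_f ?iso_hom_g.
apply: (idem_hom_eq (phi := ahcomp (iso_hom nzR xy_isoI) s)).
by rewrite ahcompE s_gen ah_endpoint iso_hom_f iso_hom_g.
Qed.

Section FilteredDiagram.
Variables (R : comPzRingType) (Dg : filtered_diagram R).
Local Notation hom := (fd_hom Dg).
Local Notation obj := (fd_obj Dg).

Lemma fd_coeq_map i j (u v : hom i j) :
  exists k (w : hom j k), forall x, fd_map w (fd_map u x) = fd_map w (fd_map v x).
Proof.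
have [k [w uv]] := fd_coeq u v; exists k, w => x.
by rewrite -!fd_map_comp uv.
Qed.

Definition fd_elt := {i : fd_idx Dg & obj i}.

Definition fd_equiv (s t : fd_elt) : Prop :=
  exists k (u : hom (tag s) k) (v : hom (tag t) k),
    fd_map u (tagged s) = fd_map v (tagged t).

Lemma fd_equiv_along s t : fd_equiv s t ->
  forall k (u : hom (tag s) k) (v : hom (tag t) k), exists l (w : hom k l),
    fd_map w (fd_map u (tagged s)) = fd_map w (fd_map v (tagged t)).
Proof.
case=> k' [u' [v' st]] k u v.
have [m [[p] [q]]] := fd_upper k k'.
have [m1 [w1 eq1]] := fd_coeq_map (fd_comp p u) (fd_comp q u').
have [m2 [w2 eq2]] := fd_coeq_map (fd_comp w1 (fd_comp p v)) (fd_comp w1 (fd_comp q v')).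
exists m2, (fd_comp w2 (fd_comp w1 p)).
have E1 := eq1 (tagged s); have E2 := eq2 (tagged t).
by rewrite !fd_map_comp in E1 E2 *; rewrite E1 st E2.
Qed.

Lemma fd_equiv_refl s : fd_equiv s s.
Proof. by exists (tag s), (fd_id _), (fd_id _). Qed.

Lemma fd_equiv_sym s t : fd_equiv s t -> fd_equiv t s.
Proof. by case=> k [u [v st]]; exists k, v, u. Qed.

Lemma fd_equiv_trans s t r : fd_equiv s t -> fd_equiv t r -> fd_equiv s r.
Proof.
case=> k1 [a [b st]] [k2 [c [d tr]]].
have [m [[p] [q]]] := fd_upper k1 k2.
have [l [w bc]] := fd_coeq_map (fd_comp p b) (fd_comp q c).
exists l, (fd_comp w (fd_comp p a)), (fd_comp w (fd_comp q d)).
by have := bc (tagged t); rewrite !fd_map_comp st tr => ->.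
Qed.

Lemma fd_equiv_map i k (u : hom i k) x :
  fd_equiv (existT _ i x) (existT _ k (fd_map u x)).
Proof. by exists k, u, (fd_id k); rewrite /= fd_map_id. Qed.

(* The colimit is the quotient of [fd_elt] by [fd_equiv]; classes are
   represented by the predicates [fd_equiv t]. *)
Definition fcolim := {P : fd_elt -> Prop | exists t, P = fd_equiv t}.

End FilteredDiagram.

HB.instance Definition _ R Dg := gen_eqMixin (@fcolim R Dg).
HB.instance Definition _ R Dg := gen_choiceMixin (@fcolim R Dg).

Section ColimitConstruction.
Variables (R : comPzRingType) (Dg : filtered_diagram R).
Local Notation I := (fd_idx Dg).
Local Notation hom := (fd_hom Dg).
Local Notation obj := (fd_obj Dg).
Local Notation fd_equiv := (@fd_equiv R Dg).
Local Notation E := (fcolim Dg).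

Definition fclass (t : fd_elt Dg) : E := exist _ (fd_equiv t) (ex_intro _ t erefl).
Local Notation cl k x := (fclass (existT _ k x)).

Lemma fclass_eq s t : fclass s = fclass t <-> fd_equiv s t.
Proof.
split=> [/(congr1 sval) /= ->|st]; first exact: fd_equiv_refl.
apply: eq_exist; apply: funext => r; apply: propext.
by split; [apply: fd_equiv_trans (fd_equiv_sym st) | apply: fd_equiv_trans st].
Qed.

Lemma fclassP (P : E) : exists t, P = fclass t.
Proof. by case: P => p [t pt]; exists t; apply: eq_exist. Qed.

Definition frep (P : E) : fd_elt Dg := sval (cid (fclassP P)).

Lemma frepK P : fclass (frep P) = P.
Proof. by rewrite /frep; case: cid => t /= ->. Qed.

Lemma frep_equiv t : fd_equiv (frep (fclass t)) t.
Proof. by apply/fclass_eq; rewrite frepK. Qed.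

Lemma fclass_common2 (P Q : E) :
  exists k (x y : obj k), P = cl k x /\ Q = cl k y.
Proof.
have [[i a] ->] := fclassP P; have [[j b] ->] := fclassP Q.
have [k [[u] [v]]] := fd_upper i j.
by exists k, (fd_map u a), (fd_map v b); split; apply/fclass_eq/fd_equiv_map.
Qed.

Lemma fclass_common3 (P Q S : E) :
  exists k (x y z : obj k), [/\ P = cl k x, Q = cl k y & S = cl k z].
Proof.
have [k [x [y [-> ->]]]] := fclass_common2 P Q; have [[j c] ->] := fclassP S.
have [m [[u] [v]]] := fd_upper k j.
by exists m, (fd_map u x), (fd_map u y), (fd_map v c); split; apply/fclass_eq/fd_equiv_map.
Qed.

Lemma fcolim_ind1 (Pr : E -> Prop) : (forall k (x : obj k), Pr (cl k x)) -> forall P, Pr P.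
Proof. by move=> Pr_cl P; have [[k x] ->] := fclassP P. Qed.

Lemma fcolim_ind2 (Pr : E -> E -> Prop) :
  (forall k (x y : obj k), Pr (cl k x) (cl k y)) -> forall P Q, Pr P Q.
Proof. by move=> Pr_cl P Q; have [k [x [y [-> ->]]]] := fclass_common2 P Q. Qed.

Lemma fcolim_ind3 (Pr : E -> E -> E -> Prop) :
  (forall k (x y z : obj k), Pr (cl k x) (cl k y) (cl k z)) -> forall P Q S, Pr P Q S.
Proof. by move=> Pr_cl P Q S; have [k [x [y [z [-> -> ->]]]]] := fclass_common3 P Q S. Qed.

Lemma upper_bound_sig i j : exists p : {k : I & (hom i k * hom j k)%type}, True.
Proof. by have [k [[u] [v]]] := fd_upper i j; exists (existT _ k (u, v)). Qed.

Definition upper_bound i j := sval (cid (upper_bound_sig i j)).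

Definition stage_op2 := forall k, obj k -> obj k -> obj k.

Definition natural_op2 (op : stage_op2) :=
  forall i j (w : hom i j) x y, fd_map w (op i x y) = op j (fd_map w x) (fd_map w y).

Section BinaryOp.
Variables (op : stage_op2) (op_nat : natural_op2 op).
Arguments op : clear implicits.

Definition elt_op2 (s t : fd_elt Dg) : fd_elt Dg :=
  let p := upper_bound (tag s) (tag t) in
  existT _ (tag p)
    (op (tag p) (fd_map (tagged p).1 (tagged s)) (fd_map (tagged p).2 (tagged t))).

Lemma elt_op2_equiv s1 s2 t1 t2 :
  fd_equiv s1 t1 -> fd_equiv s2 t2 -> fd_equiv (elt_op2 s1 s2) (elt_op2 t1 t2).
Proof.
case: s1 s2 t1 t2 => [i a] [j b] [i' a'] [j' b'] eq1 eq2; rewrite /elt_op2 /=.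
case: (upper_bound i j) => k [u v]; case: (upper_bound i' j') => k' [u' v'] /=.
have [m [[p] [q]]] := fd_upper k k'.
have [l1 [w1 E1]] := fd_equiv_along eq1 (fd_comp p u) (fd_comp q u').
have [l2 [w2 E2]] := fd_equiv_along eq2 (fd_comp w1 (fd_comp p v)) (fd_comp w1 (fd_comp q v')).
exists l2, (fd_comp w2 (fd_comp w1 p)), (fd_comp w2 (fd_comp w1 q)).
rewrite /= !op_nat; rewrite /= !fd_map_comp in E1 E2.
by rewrite !fd_map_comp E1 E2.
Qed.

Lemma elt_op2_same k (x y : obj k) :
  fd_equiv (elt_op2 (existT _ k x) (existT _ k y)) (existT _ k (op k x y)).
Proof.
rewrite /elt_op2 /=; case: (upper_bound k k) => m [u v] /=.
have [l [w uv]] := fd_coeq_map u v.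
exists l, w, (fd_comp w u) => /=.
by rewrite op_nat -[fd_map w (fd_map v y)]uv fd_map_comp op_nat.
Qed.

Definition colim_op2 (P Q : E) : E := fclass (elt_op2 (frep P) (frep Q)).

Lemma colim_op2E k (x y : obj k) : colim_op2 (cl k x) (cl k y) = cl k (op k x y).
Proof.
apply/fclass_eq; apply: fd_equiv_trans (elt_op2_same x y).
by apply: elt_op2_equiv; apply: frep_equiv.
Qed.

End BinaryOp.

Definition colim_op1 (op : forall k, obj k -> obj k) (P : E) : E :=
  cl (tag (frep P)) (op _ (tagged (frep P))).

Lemma colim_op1E (op : forall k, obj k -> obj k)
    (op_nat : forall i j (w : hom i j) x, fd_map w (op i x) = op j (fd_map w x)) k (x : obj k) :
  colim_op1 op (cl k x) = cl k (op k x).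
Proof.
apply/fclass_eq; have := frep_equiv (existT _ k x).
by case: (frep _) => i a [m [u [v uv]]]; exists m, u, v; rewrite /= !op_nat uv.
Qed.

Lemma fclass_const (c : forall k, obj k)
    (c_nat : forall i j (w : hom i j), fd_map w (c i) = c j) k k' :
  cl k (c k) = cl k' (c k').
Proof.
apply/fclass_eq; have [m [[u] [v]]] := fd_upper k k'.
by exists m, u, v; rewrite /= !c_nat.
Qed.

Lemma stage0_sig : exists i : I, True.
Proof. by case: (fd_nonempty Dg) => i; exists i. Qed.

Definition stage0 : I := sval (cid stage0_sig).

Definition fcolim_add := colim_op2 (fun k (a b : obj k) => a + b).
Definition fcolim_mul := colim_op2 (fun k (a b : obj k) => a * b).
Definition fcolim_opp := colim_op1 (fun k (a : obj k) => - a).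
Definition fcolim_zero : E := cl stage0 (0 : obj stage0).
Definition fcolim_one : E := cl stage0 (1 : obj stage0).
Definition fcolim_str (r : R) : E := cl stage0 (alg_str (obj stage0) r).

Lemma fcolim_addE k (x y : obj k) : fcolim_add (cl k x) (cl k y) = cl k (x + y).
Proof. by apply: colim_op2E => i j w a b; rewrite ahD. Qed.
Lemma fcolim_mulE k (x y : obj k) : fcolim_mul (cl k x) (cl k y) = cl k (x * y).
Proof. by apply: colim_op2E => i j w a b; rewrite ahM. Qed.
Lemma fcolim_oppE k (x : obj k) : fcolim_opp (cl k x) = cl k (- x).
Proof. by apply: colim_op1E => i j w a; rewrite ahN. Qed.
Lemma fcolim_zeroE k : fcolim_zero = cl k (0 : obj k).
Proof. by apply: (fclass_const (c := fun k => 0 : obj k)) => i j w; rewrite ah0. Qed.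
Lemma fcolim_oneE k : fcolim_one = cl k (1 : obj k).
Proof. by apply: (fclass_const (c := fun k => 1 : obj k)) => i j w; rewrite ah1. Qed.
Lemma fcolim_strE r k : fcolim_str r = cl k (alg_str (obj k) r).
Proof. by apply: (fclass_const (c := fun k => alg_str (obj k) r)) => i j w; rewrite ahS. Qed.

Lemma fcolim_addA : associative fcolim_add.
Proof. by apply: fcolim_ind3 => k x y z; rewrite !fcolim_addE addrA. Qed.
Lemma fcolim_addC : commutative fcolim_add.
Proof. by apply: fcolim_ind2 => k x y; rewrite !fcolim_addE addrC. Qed.
Lemma fcolim_add0 : left_id fcolim_zero fcolim_add.
Proof. by apply: fcolim_ind1 => k x; rewrite (fcolim_zeroE k) fcolim_addE add0r. Qed.
Lemma fcolim_addN : left_inverse fcolim_zero fcolim_opp fcolim_add.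
Proof. by apply: fcolim_ind1 => k x; rewrite fcolim_oppE fcolim_addE addNr (fcolim_zeroE k). Qed.

HB.instance Definition _ :=
  GRing.isZmodule.Build E fcolim_addA fcolim_addC fcolim_add0 fcolim_addN.

Lemma fcolim_mulA : associative fcolim_mul.
Proof. by apply: fcolim_ind3 => k x y z; rewrite !fcolim_mulE mulrA. Qed.
Lemma fcolim_mul1 : left_id fcolim_one fcolim_mul.
Proof. by apply: fcolim_ind1 => k x; rewrite (fcolim_oneE k) fcolim_mulE mul1r. Qed.
Lemma fcolim_mulr1 : right_id fcolim_one fcolim_mul.
Proof. by apply: fcolim_ind1 => k x; rewrite (fcolim_oneE k) fcolim_mulE mulr1. Qed.
Lemma fcolim_mulDl : left_distributive fcolim_mul fcolim_add.
Proof. by apply: fcolim_ind3 => k x y z; rewrite !fcolim_addE !fcolim_mulE mulrDl fcolim_addE. Qed.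
Lemma fcolim_mulDr : right_distributive fcolim_mul fcolim_add.
Proof. by apply: fcolim_ind3 => k x y z; rewrite !fcolim_addE !fcolim_mulE mulrDr fcolim_addE. Qed.

HB.instance Definition _ := GRing.Zmodule_isPzRing.Build E
  fcolim_mulA fcolim_mul1 fcolim_mulr1 fcolim_mulDl fcolim_mulDr.

Lemma fcolim_strD r s : fcolim_str (r + s) = fcolim_str r + fcolim_str s.
Proof. by rewrite !(fcolim_strE _ stage0) alg_strD -fcolim_addE. Qed.
Lemma fcolim_strM r s : fcolim_str (r * s) = fcolim_str r * fcolim_str s.
Proof. by rewrite !(fcolim_strE _ stage0) alg_strM -fcolim_mulE. Qed.
Lemma fcolim_str1 : fcolim_str 1 = 1.
Proof. by rewrite (fcolim_strE _ stage0) alg_str1. Qed.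
Lemma fcolim_strC r (P : E) : fcolim_str r * P = P * fcolim_str r.
Proof.
move: P; apply: fcolim_ind1 => k x.
by rewrite -[LHS]/(fcolim_mul _ _) -[RHS]/(fcolim_mul _ _) (fcolim_strE _ k) !fcolim_mulE alg_strC.
Qed.

Definition fcolim_alg : pzAlgType R :=
  PzAlgType fcolim_strD fcolim_strM fcolim_str1 fcolim_strC.

Lemma fcolim_inD i (x y : obj i) : cl i (x + y) = cl i x + cl i y :> fcolim_alg.
Proof. by rewrite -fcolim_addE. Qed.
Lemma fcolim_inM i (x y : obj i) : cl i (x * y) = cl i x * cl i y :> fcolim_alg.
Proof. by rewrite -fcolim_mulE. Qed.
Lemma fcolim_in1 i : cl i (1 : obj i) = 1 :> fcolim_alg.
Proof. by rewrite -fcolim_oneE. Qed.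
Lemma fcolim_inS i r : cl i (alg_str (obj i) r) = alg_str fcolim_alg r.
Proof. by rewrite /= (fcolim_strE _ i). Qed.

Definition fcolim_in i : algHom (obj i) fcolim_alg :=
  AlgHom (@fcolim_inD i) (@fcolim_inM i) (@fcolim_in1 i) (@fcolim_inS i).

Lemma fcolim_in_cocone i j (u : hom i j) x : fcolim_in j (fd_map u x) = fcolim_in i x.
Proof. exact/fclass_eq/fd_equiv_sym/fd_equiv_map. Qed.

End ColimitConstruction.

Section ColimitFacts.
Variables (R : comPzRingType) (Dg : filtered_diagram R) (C : pzAlgType R)
  (iota : forall i, algHom (fd_obj Dg i) C).
Hypothesis iota_colim : is_colimit iota.
Local Notation hom := (fd_hom Dg).
Local Notation obj := (fd_obj Dg).
Local Notation cl k x := (fclass (existT _ k x)).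

Lemma colimit_cocone i j (u : hom i j) x : iota j (fd_map u x) = iota i x.
Proof. exact: iota_colim.1. Qed.

Definition fcolim_out_fun (P : fcolim_alg Dg) : C := iota (tag (frep P)) (tagged (frep P)).

Lemma fcolim_outE k x : fcolim_out_fun (cl k x) = iota k x.
Proof.
have [m [u [v uv]]] := frep_equiv (existT _ k x).
by rewrite /fcolim_out_fun -(colimit_cocone u) uv colimit_cocone.
Qed.

Lemma fcolim_outD P Q : fcolim_out_fun (P + Q) = fcolim_out_fun P + fcolim_out_fun Q.
Proof.
move: P Q; apply: fcolim_ind2 => k x y.
by rewrite -[_ + _]/(fcolim_add _ _) fcolim_addE !fcolim_outE ahD.
Qed.
Lemma fcolim_outM P Q : fcolim_out_fun (P * Q) = fcolim_out_fun P * fcolim_out_fun Q.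
Proof.
move: P Q; apply: fcolim_ind2 => k x y.
by rewrite -[_ * _]/(fcolim_mul _ _) fcolim_mulE !fcolim_outE ahM.
Qed.
Lemma fcolim_out1 : fcolim_out_fun 1 = 1.
Proof. by rewrite -[1]/(fcolim_one Dg) fcolim_outE ah1. Qed.
Lemma fcolim_outS r : fcolim_out_fun (alg_str (fcolim_alg Dg) r) = alg_str C r.
Proof. by rewrite -[alg_str _ r]/(fcolim_str Dg r) fcolim_outE ahS. Qed.

Definition fcolim_out : algHom (fcolim_alg Dg) C :=
  AlgHom fcolim_outD fcolim_outM fcolim_out1 fcolim_outS.

Lemma fcolim_out_in i (x : obj i) : fcolim_out (fcolim_in i x) = iota i x.
Proof. exact: fcolim_outE. Qed.

Lemma colimit_surj (z : C) : exists i (x : obj i), iota i x = z.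
Proof.
have [cocone univ] := iota_colim.
have [[h h_in] _] := univ _ _ (@fcolim_in_cocone R Dg).
have out_h : fcolim_out (h z) = z.
  apply: ((univ C iota cocone).2 (ahcomp fcolim_out h) (ahid C)) => // i x.
  by rewrite ahcompE h_in fcolim_out_in.
by have [[i x] hz] := fclassP (h z); exists i, x; rewrite -out_h hz; symmetry; apply: fcolim_outE.
Qed.

Lemma colimit_eq i j (x : obj i) (y : obj j) : iota i x = iota j y ->
  exists k (u : hom i k) (v : hom j k), fd_map u x = fd_map v y.
Proof.
have [[h h_in] _] := iota_colim.2 _ _ (@fcolim_in_cocone R Dg).
by move=> /(congr1 h); rewrite !h_in => /fclass_eq.
Qed.

Lemma colimit_eq_stage m (p q : obj m) : iota m p = iota m q ->
  exists l (w : hom m l), fd_map w p = fd_map w q.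
Proof.
move=> /colimit_eq pq.
have [l [w]] := @fd_equiv_along R Dg (existT _ m p) (existT _ m q) pq m (fd_id m) (fd_id m).
by rewrite /= !fd_map_id; exists l, w.
Qed.

Lemma colimit_eq_stage3 m (p1 q1 p2 q2 p3 q3 : obj m) :
  iota m p1 = iota m q1 -> iota m p2 = iota m q2 -> iota m p3 = iota m q3 ->
  exists l (w : hom m l), [/\ fd_map w p1 = fd_map w q1,
     fd_map w p2 = fd_map w q2 & fd_map w p3 = fd_map w q3].
Proof.
move=> /colimit_eq_stage [l1 [w1 E1]] E2 E3.
have /colimit_eq_stage [l2 [w2 {}E2]] : iota l1 (fd_map w1 p2) = iota l1 (fd_map w1 q2).
  by rewrite !colimit_cocone.
have /colimit_eq_stage [l3 [w3 {}E3]] :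
    iota l2 (fd_map w2 (fd_map w1 p3)) = iota l2 (fd_map w2 (fd_map w1 q3)).
  by rewrite !colimit_cocone.
by exists l3, (fd_comp w3 (fd_comp w2 w1)); split; rewrite !fd_map_comp ?E1 ?E2 ?E3.
Qed.

Lemma colimit_hom_eq (B : pzAlgType R) (p q : B) :
  (forall (E : pzAlgType R) (phi psi : algHom B E),
     phi p = psi p -> phi q = psi q -> forall z, phi z = psi z) ->
  forall i j (b1 : algHom B (obj i)) (b2 : algHom B (obj j)),
    (forall y, iota i (b1 y) = iota j (b2 y)) ->
    exists k (u : hom i k) (v : hom j k), forall y, fd_map u (b1 y) = fd_map v (b2 y).
Proof.
move=> pq_gen i j b1 b2 b12.
have [k [u [v Ep]]] := colimit_eq (b12 p).
have /colimit_eq_stage [l [w Eq]] : iota k (fd_map u (b1 q)) = iota k (fd_map v (b2 q)).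
  by rewrite !colimit_cocone b12.
exists l, (fd_comp w u), (fd_comp w v).
by apply: (pq_gen _ (ahcomp (fd_map (fd_comp w u)) b1) (ahcomp (fd_map (fd_comp w v)) b2));
  rewrite !ahcompE !fd_map_comp ?Ep.
Qed.

End ColimitFacts.

Lemma idem_str_lfp (R : comPzRingType) (u : algHom (regular_alg R) (idem_alg R)) : lfp u.
Proof.
move=> Dg C iota iota_colim; split=> [i a b _|i j b1 b2 _]; last first.
  apply: (colimit_hom_eq iota_colim (p := idem_gen R) (q := idem_gen R)).
  by move=> E phi psi eq_e _; apply: idem_hom_eq.
have cocone := colimit_cocone iota_colim.
have [j [p ip]] := colimit_surj iota_colim (b (idem_gen R)).
have /(colimit_eq_stage iota_colim) [l [w pp]] : iota j (p * p) = iota j p.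
  by rewrite ahM ip -ahM idem_gen_idem.
have p_idem : isIdem (fd_map w p) by rewrite /isIdem -ahM pp.
exists l, (idem_hom p_idem); split.
  apply: (idem_hom_eq (phi := ahcomp (iota l) (idem_hom p_idem))).
  by rewrite ahcompE idem_hom_gen cocone.
have [k [[v1] [v2]]] := fd_upper l i.
exists k, v1, v2 => x.
exact: (regular_hom_eq (ahcomp (fd_map v1) (ahcomp (idem_hom p_idem) u)) (ahcomp (fd_map v2) a)).
Qed.

Lemma endpoint_lfp (R : comPzRingType) (nzR : (1 : R) != 0) c
  (s : algHom (idem_alg R) (iso_alg nzR)) :
  s (idem_gen R) = endpoint c (iso_f nzR) (iso_g nzR) -> lfp s.
Proof.
move=> s_gen Dg C iota iota_colim; split=> [i a b ab|i j b1 b2 _]; last first.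
  exact: (colimit_hom_eq iota_colim (@iso_hom_eq R nzR)).
have cocone := colimit_cocone iota_colim.
have [fgf gfg] := iso_fg_isoI nzR.
have [j1 [x1 ix1]] := colimit_surj iota_colim (b (iso_f nzR)).
have [j2 [y1 iy1]] := colimit_surj iota_colim (b (iso_g nzR)).
have [m1 [[p0] [p1]]] := fd_upper i j1.
have [m [[q1] [q2]]] := fd_upper m1 j2.
pose x := fd_map (fd_comp q1 p1) x1; pose y := fd_map q2 y1.
pose e := fd_map (fd_comp q1 p0) (a (idem_gen R)).
have ix : iota m x = b (iso_f nzR) by rewrite cocone.
have iy : iota m y = b (iso_g nzR) by rewrite cocone.
have E1 : iota m (x * y * x) = iota m x by rewrite !ahM ix iy -!ahM fgf.
have E2 : iota m (y * x * y) = iota m y by rewrite !ahM ix iy -!ahM gfg.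
have E3 : iota m (endpoint c x y) = iota m e.
  by rewrite cocone ab s_gen !ah_endpoint ix iy.
have [l [w [W1 W2 W3]]] := colimit_eq_stage3 iota_colim E1 E2 E3.
have xy_isoI : isIsoI (fd_map w x) (fd_map w y) by split; rewrite -!ahM ?W1 ?W2.
exists l, (iso_hom nzR xy_isoI); split.
  apply: (iso_hom_eq (phi := ahcomp (iota l) (iso_hom nzR xy_isoI))) => //;
    by rewrite ahcompE ?iso_hom_f ?iso_hom_g cocone.
exists l, (fd_id l), (fd_comp w (fd_comp q1 p0)) => z; rewrite fd_map_id.
apply: (idem_hom_eq (phi := ahcomp (iso_hom nzR xy_isoI) s)
  (psi := ahcomp (fd_map (fd_comp w (fd_comp q1 p0))) a)).
by rewrite !ahcompE s_gen ah_endpoint iso_hom_f iso_hom_g fd_map_comp -/e -W3 ah_endpoint.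
Qed.

Section ZeroRing.
Variables (R : comPzRingType) (R10 : (1 : R) = 0).

Lemma zero_ring_eq (B : pzAlgType R) (x y : B) : x = y.
Proof. by rewrite -[x]mulr1 -[y]mulr1 -(alg_str1 B) R10 alg_str0 !mulr0. Qed.

Lemma zero_ring_represents_Iso : represents_Iso (0 : regular_alg R) 0.
Proof.
split=> [|B]; first by split; apply: zero_ring_eq.
split=> [x y _|phi psi _ _ z]; last exact: zero_ring_eq.
by exists (str_hom B); split; apply: zero_ring_eq.
Qed.

Lemma zero_ring_submersive (A : pzAlgType R) (s : algHom A (regular_alg R)) : submersive s.
Proof.
split=> [C D pi _ _ b a _|Dg C iota _].
  by exists (str_hom C); split=> *; apply: zero_ring_eq.
split=> [i a b _|i j b1 b2 _ _].
  exists i, (str_hom _); split=> [y|]; first exact: zero_ring_eq.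
  by exists i, (fd_id i), (fd_id i) => x; apply: zero_ring_eq.
have [k [[u] [v]]] := fd_upper i j.
by exists k, u, v => y; apply: zero_ring_eq.
Qed.

End ZeroRing.

Theorem lemma2p12 (R : comPzRingType) :
  exists (AOb : pzAlgType R) (e : AOb) (AIso : pzAlgType R) (f g : AIso),
    represents_Ob e /\ represents_Iso f g /\
    (* the source map Iso_I -> Ob_I, (f,g) |-> gf, is submersive *)
    (forall s : algHom AOb AIso, s e = g * f -> submersive s) /\
    (* the target map Iso_I -> Ob_I, (f,g) |-> fg, is submersive *)
    (forall t : algHom AOb AIso, t e = f * g -> submersive t) /\
    (* Ob_I -> Spec^nc R is submersive, i.e. R -> AOb is submersive *)
    (forall u : algHom (regular_alg R) AOb, submersive u).
Proof.
have idem_str_submersive (u : algHom (regular_alg R) (idem_alg R)) : submersive u.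
  by split; [apply: idem_str_formally_submersive | apply: idem_str_lfp].
have [R10|nzR] := eqVneq (1 : R) 0.
  exists (idem_alg R), (idem_gen R), (regular_alg R), 0, 0.
  split; first exact: idem_alg_represents.
  split; first exact: zero_ring_represents_Iso.
  split; first by move=> s _; apply: zero_ring_submersive.
  by split; [move=> t _; apply: zero_ring_submersive | exact: idem_str_submersive].
exists (idem_alg R), (idem_gen R), (iso_alg nzR), (iso_f nzR), (iso_g nzR).
have endpoint_submersive c (s : algHom (idem_alg R) (iso_alg nzR)) :
    s (idem_gen R) = endpoint c (iso_f nzR) (iso_g nzR) -> submersive s.
  by move=> s_gen; split; [apply: endpoint_formally_submersive s_gen | apply: endpoint_lfp s_gen].
split; first exact: idem_alg_represents.
split; first exact: iso_alg_represents.
by split; [apply: (endpoint_submersive false) | split; [apply: (endpoint_submersive true)|]].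
Qed.
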